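(* Let $a>1$ be an integer that is a zero divisor in $\mathbb{Z}/m\mathbb{Z}$, let $k\ge 1$ with $a^k\mid m$, and let $(K_n,\alpha)$ be an edge-labeled complete graph over $\mathbb{Z}/m\mathbb{Z}$ with ordered edge labels $a^{i_1},a^{i_2},\dots,a^{i_{r_n}}$. (1) If $a^{i_{r_n}}\mid a^{i_{r_n-1}}\mid\cdots\mid a^{i_2}\mid a^{i_1}\mid a^k$ with $i_{r_n}\ge1$ and $i_1<k$, then the set consisting of $(1,\dots,1)$ together with, for each $j=2,\dots,n$, the vector with $a^{i_{r_{j-1}+1}}$ at $v_j$ and $0$ elsewhere, is a minimum flow-up generating set of $[\mathbb{Z}/m\mathbb{Z}]_{(K_n,\alpha)}$; thus the rank is $n$. (2) If $a^{i_1}\mid a^{i_2}\mid\cdots\mid a^{i_{r_n}}\mid a^k$ with $i_1\ge1$ and $i_{r_n}<k$, then the set consisting of $(1,\dots,1)$ together with, for each $j=2,\dots,n$, the vector with entries $a^{i_{r_n-(n-j)}}$ at $v_j,\dots,v_n$ and $0$ at $v_1,\dots,v_{j-1}$, is a minimum flow-up generating set of $[\mathbb{Z}/m\mathbb{Z}]_{(K_n,\alpha)}$; thus the rank is $n$.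
   Context: A spline on an edge-labeled graph $(G,\alpha)$ over $\mathbb{Z}/m\mathbb{Z}$ (edges labeled by nonzero ideals) is a vector $(f_{v_1},\dots,f_{v_n})\in(\mathbb{Z}/m\mathbb{Z})^n$ with $f_{v_i}-f_{v_j}\in\alpha(v_iv_j)$ for every edge; the splines form a $\mathbb{Z}$-module $[\mathbb{Z}/m\mathbb{Z}]_{(G,\alpha)}$. An $i$-th flow-up class is a spline with $f_{v_i}\ne0$ and $f_{v_t}=0$ for $t<i$. A minimum generating set is a generating set of the $\mathbb{Z}$-module of smallest size (the rank); a minimum flow-up generating set is one consisting of flow-up classes. $K_n$ is the complete graph on $v_1,\dots,v_n$; $r_k=k(k-1)/2$; for $1\le j<k\le n$ the edge $v_jv_k$ is $e_{r_{k-1}+j}$. ''Ordered edge labels $l_1,\dots,l_{r_n}$'' means $\alpha(e_s)$ is the ideal generated by $l_s+m\mathbb{Z}$. Vectors are written $(f_{v_1},\dots,f_{v_n})$. *)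

From HB Require Import structures.
From mathcomp Require Import all_boot all_order all_algebra.
Set Implicit Arguments. Unset Strict Implicit. Unset Printing Implicit Defensive.
Import Order.TTheory GRing.Theory Num.Theory.
Local Open Scope ring_scope.

(* Z/mZ is 'Z_m (with 1 < m); vertices v_1..v_n are 'I_n (v_t is index t-1);
   vectors (f_{v_1},...,f_{v_n}) are row vectors 'rV['Z_m]_n. *)

Definition rr (k : nat) : nat := (k * k.-1 %/ 2)%N.

(* 1-indexed: for 1 <= j < k <= n, the edge v_j v_k is e_(r_{k-1}+j) *)
Definition edge_index (j k : nat) : nat := (rr k.-1 + j)%N.

Definition in_ideal (m : nat) (x : 'Z_m) (l : nat) : Prop :=
  exists c : 'Z_m, x = c * (l%:R).

(* splines on (K_n, alpha) with ordered edge labels l_1, ..., l_{r_n}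
   (alpha(e_s) = ideal generated by l s + mZ); vertex indices are 0-based *)
Definition is_spline (m n : nat) (l : nat -> nat) (f : 'rV['Z_m]_n) : Prop :=
  forall j k : 'I_n, (j < k)%N ->
    in_ideal (f ord0 j - f ord0 k) (l (edge_index j.+1 k.+1)).

Definition is_flowup_at (m n : nat) (l : nat -> nat) (f : 'rV['Z_m]_n)
    (i : 'I_n) : Prop :=
  is_spline l f /\ f ord0 i != 0 /\ (forall t : 'I_n, (t < i)%N -> f ord0 t = 0).

Definition is_flowup (m n : nat) (l : nat -> nat) (f : 'rV['Z_m]_n) : Prop :=
  exists i : 'I_n, is_flowup_at l f i.

Definition is_generating_set (m n : nat) (l : nat -> nat)
    (T : {set 'rV['Z_m]_n}) : Prop :=
  (forall g, g \in T -> is_spline l g) /\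
  (forall f, is_spline l f ->
     exists c : 'rV['Z_m]_n -> int, f = \sum_(g in T) g *~ c g).

Definition is_min_generating_set (m n : nat) (l : nat -> nat)
    (S : {set 'rV['Z_m]_n}) : Prop :=
  is_generating_set l S /\
  (forall T : {set 'rV['Z_m]_n}, is_generating_set l T -> (#|S| <= #|T|)%N).

Definition is_min_flowup_generating_set (m n : nat) (l : nat -> nat)
    (S : {set 'rV['Z_m]_n}) : Prop :=
  is_min_generating_set l S /\ (forall g, g \in S -> is_flowup l g).

Definition zero_divisor (m : nat) (a : nat) : Prop :=
  (a%:R : 'Z_m) != 0 /\ exists b : 'Z_m, b != 0 /\ (a%:R : 'Z_m) * b = 0.

(* generators of part (1): for 0-based j in 1..n-1, a^{i_{r_j + 1}} at v_{j+1} *)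
Definition gen1 (m n a : nat) (i : nat -> nat) (j : 'I_n) : 'rV['Z_m]_n :=
  \row_(t < n) (if t == j then ((a ^ i (rr j + 1))%N)%:R else 0).

(* generators of part (2): for 0-based j in 1..n-1,
   a^{i_{r_n - (n - (j+1))}} at v_{j+1},...,v_n and 0 before *)
Definition gen2 (m n a : nat) (i : nat -> nat) (j : 'I_n) : 'rV['Z_m]_n :=
  \row_(t < n) (if (j <= t)%N then ((a ^ i (rr n - (n - j.+1)))%N)%:R else 0).

Definition ones (m n : nat) : 'rV['Z_m]_n := const_mx 1.

(* Both generating sets are triangular with respect to a spanning tree of K_n:
   a star centred at v_1 in part (1), the path v_1 v_2 ... v_n in part (2).
   Taking differences along the tree, f |-> (f_1, f_j - f_(parent j))_(j >= 2),
   is injective, sends the j-th generator to d_j e_j (d_1 = 1, d_j the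
   label of the tree edge into v_j) and, by the divisibility chain, sends
   every spline into the product of the ideals (d_j); so the generators
   span.  For the rank, let p be a prime factor of a.  Since d_j p | m,
   rescaling the j-th difference by m/(d_j p) gives a Z-linear map from the
   splines onto ((m/p) Z_m)^n ~ (Z/p)^n that kills p, so a generating
   set with t elements has an image of size at most p^t. *)

From HB Require Import structures.
From mathcomp Require Import all_boot all_order all_algebra.
Import Order.TTheory GRing.Theory Num.Theory.
From mathcomp Require Import ring zify.
Set Implicit Arguments. Unset Strict Implicit. Unset Printing Implicit Defensive.
Local Open Scope ring_scope.

Section IntSpan.
Variable V : finZmodType.
Implicit Types (T : {set V}) (f g : V).

Definition int_span T f := exists c : V -> int, f = \sum_(g in T) g *~ c g.

Lemma int_span0 T : int_span T 0.
Proof. by exists (fun=> 0); rewrite big1 // => g _; rewrite mulr0z. Qed.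

Lemma int_spanD T f g : int_span T f -> int_span T g -> int_span T (f + g).
Proof.
move=> [c ->] [d ->]; exists (fun h => c h + d h).
by rewrite -big_split; apply: eq_bigr => h _; rewrite mulrzDr.
Qed.

Lemma int_spanMn T f k : int_span T f -> int_span T (f *+ k).
Proof.
move=> [c ->]; exists (fun h => c h * k%:Z).
by rewrite -sumrMnl; apply: eq_bigr => h _; rewrite mulrzA pmulrn.
Qed.

Lemma int_span_mem T g : g \in T -> int_span T g.
Proof.
move=> gT; exists (fun h => (h == g)%:R); rewrite (bigD1 g) //= eqxx mulr1z.
by rewrite big1 ?addr0 // => h /andP[_ /negbTE ->]; rewrite mulr0z.
Qed.

Lemma int_span_sum T (I : finType) (F : I -> V) :
  (forall j, int_span T (F j)) -> int_span T (\sum_j F j).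
Proof. by move=> spanF; apply: big_ind => //; [exact: int_span0 | exact: int_spanD]. Qed.

End IntSpan.

Lemma mulrz_torsion (V : zmodType) (x : V) (p : nat) (z : int) :
  (0 < p)%N -> x *+ p = 0 -> exists r : 'I_p, x *~ z = x *+ r.
Proof.
move=> p_gt0 xp0; have pz : p%:Z != 0 by lia.
have r_lt : (`|(z %% p)%Z| < p)%N.
  by rewrite -ltz_nat gez0_abs ?modz_ge0 // ltz_pmod // ltz_nat.
exists (Ordinal r_lt) => /=.
rewrite {1}(divz_eq z p) mulrzDr mulrC mulrzA -pmulrn xp0 mul0rz add0r.
by rewrite pmulrn gez0_abs ?modz_ge0.
Qed.

Lemma card_additive_span_le (V W : finZmodType) (phi : {additive V -> W})
    (T A : {set V}) (p : nat) :
  (0 < p)%N -> (forall g, g \in T -> phi g *+ p = 0) ->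
  (forall f, f \in A -> int_span T f) -> (#|phi @: A| <= p ^ #|T|)%N.
Proof.
move=> p_gt0 phiT spanA.
pose combos := [set \sum_(i < #|T|) phi (enum_val i) *+ e i
                 | e : {ffun 'I_#|T| -> 'I_p}].
apply: (@leq_trans #|combos|); last first.
  by rewrite (leq_trans (leq_imset_card _ _)) // card_ffun !card_ord.
apply/subset_leq_card/subsetP => _ /imsetP[f /spanA[c ->] ->].
rewrite raddf_sum big_enum_val.
have /fin_all_exists[e eP] (i : 'I_#|T|) : exists r : 'I_p,
    phi (enum_val i *~ c (enum_val i)) = phi (enum_val i) *+ r.
  by rewrite raddfMz; apply: mulrz_torsion => //; apply/phiT/enum_valP.
apply/imsetP; exists [ffun i => e i] => //.
by apply: eq_bigr => i _; rewrite eP ffunE.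
Qed.


Lemma Zp_natr_eq0 (m x : nat) : (1 < m)%N -> ((x%:R : 'Z_m) == 0) = (m %| x)%N.
Proof. by move=> m_gt1; rewrite -(inj_eq val_inj) /= val_Zp_nat. Qed.

Lemma Zp_divn_mulrn_inj (m p c c' : nat) : (1 < m)%N -> (p %| m)%N ->
  (c < p)%N -> (c' < p)%N ->
  ((m %/ p)%:R : 'Z_m) *+ c = (m %/ p)%:R *+ c' -> c = c'.
Proof.
move=> m_gt1 p_m c_lt c'_lt.
have p_gt0 : (0 < p)%N by apply: leq_ltn_trans c_lt.
have mp_gt0 : (0 < m %/ p)%N by rewrite divn_gt0 // dvdn_leq // ltnW.
have lt_m e : (e < p)%N -> (m %/ p * e < m)%N.
  by move=> e_lt; rewrite -[X in (_ < X)%N](divnK p_m) ltn_pmul2l.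
rewrite -!mulrnA => /(congr1 val); rewrite /= !val_Zp_nat // !modn_small ?lt_m //.
by move/eqP; rewrite eqn_pmul2l // => /eqP.
Qed.

Lemma natr_mul_divn (m d p : nat) : (0 < m)%N -> (d * p %| m)%N ->
  (d%:R * (m %/ (d * p))%:R : 'Z_m) = (m %/ p)%:R.
Proof.
move=> m_gt0 /dvdnP[q m_eq].
have : (0 < q * (d * p))%N by rewrite -m_eq.
rewrite !muln_gt0 => /and3P[_ d_gt0 p_gt0].
have -> : (m %/ (d * p) = q)%N by rewrite m_eq mulnK ?muln_gt0 ?d_gt0.
have -> : (m %/ p = q * d)%N by rewrite m_eq mulnA mulnK.
by rewrite -natrM mulnC.
Qed.

Lemma natr_neq0_of_mul_dvdn (m d p : nat) : (1 < m)%N -> (1 < p)%N ->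
  (d * p %| m)%N -> (d%:R : 'Z_m) != 0.
Proof.
move=> m_gt1 p_gt1 dp_m; rewrite Zp_natr_eq0 //; apply/negP => m_d.
have d_gt0 : (0 < d)%N.
  by apply: (dvdn_gt0 (ltnW m_gt1)); apply: dvdn_trans (dvdn_mulr _ _) dp_m.
have := dvdn_trans dp_m m_d; rewrite -{2}(muln1 d) dvdn_pmul2l // dvdn1.
by move/eqP=> p1; rewrite p1 in p_gt1.
Qed.

Section TriangularBasis.

Variables (m n : nat) (M : 'rV['Z_m]_n -> Prop).
Variables (delta : {additive 'rV['Z_m]_n -> 'rV['Z_m]_n}) (d : 'I_n -> nat).
Variable G : 'I_n -> 'rV['Z_m]_n.

Hypothesis delta_inj : forall f, delta f = 0 -> f = 0.
Hypothesis delta_M : forall f, M f -> forall j, in_ideal (delta f ord0 j) (d j).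
Hypothesis delta_G : forall j, delta (G j) = \row_t (if t == j then (d j)%:R else 0).

Lemma int_span_triangular f : M f -> int_span [set G j | j : 'I_n] f.
Proof.
move=> Mf; have [c fc] := fin_all_exists (delta_M Mf).
suff -> : f = \sum_j G j *+ c j.
  by apply: int_span_sum => j; apply/int_spanMn/int_span_mem/imset_f.
apply/eqP; rewrite -subr_eq0; apply/eqP/delta_inj.
rewrite raddfB raddf_sum; apply/rowP => t; rewrite !mxE summxE.
rewrite (bigD1 t) //= big1 => [|j /negbTE tj]; last first.
  by rewrite raddfMn delta_G mulmxnE mxE eq_sym tj mul0rn.
rewrite raddfMn delta_G mulmxnE mxE eqxx fc addr0.
by rewrite -[_ *+ c t]mulr_natr natr_Zp mulrC subrr.
Qed.

Hypothesis m_gt1 : (1 < m)%N.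
Variable p : nat.
Hypothesis p_gt1 : (1 < p)%N.
Hypothesis dp_m : forall j, (d j * p %| m)%N.
Hypothesis M_G : forall j, M (G j).

Lemma triangular_basis_inj : injective G.
Proof.
move=> j j' /(congr1 delta); rewrite !delta_G => /rowP/(_ j); rewrite !mxE eqxx.
by case: eqP => // _ /eqP; rewrite (negbTE (natr_neq0_of_mul_dvdn m_gt1 p_gt1 (dp_m j))).
Qed.

(* Each coordinate of [delta f] lies in (d_j), so scaling it by m/(d_j p)
   lands in the p-torsion subgroup (m/p) Z_m. *)
Definition torsion_coord (f : 'rV['Z_m]_n) : 'rV['Z_m]_n :=
  \row_j (delta f ord0 j * (m %/ (d j * p))%:R).

Lemma torsion_coord_is_additive : zmod_morphism torsion_coord.
Proof. by move=> f g; apply/rowP => j; rewrite !mxE raddfB !mxE mulrBl. Qed.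

HB.instance Definition _ := GRing.isZmodMorphism.Build _ _ torsion_coord
  torsion_coord_is_additive.

Lemma torsion_coord_M f : M f -> torsion_coord f *+ p = 0.
Proof.
move=> Mf; apply/rowP => j; rewrite mulmxnE !mxE.
have [c ->] := delta_M Mf j.
rewrite -mulrA natr_mul_divn ?dp_m 1?ltnW // -mulrnAr -mulrnA divnK.
  by rewrite pchar_Zp // mulr0.
exact: dvdn_trans (dvdn_mull _ _) (dp_m j).
Qed.

Lemma torsion_coord_G j :
  torsion_coord (G j) = \row_t (if t == j then (m %/ p)%:R else 0).
Proof.
apply/rowP => t; rewrite !mxE delta_G mxE.
by case: eqP => [->|_]; rewrite ?mul0r // natr_mul_divn ?dp_m 1?ltnW.
Qed.

Lemma card_generating_set_ge (T : {set 'rV['Z_m]_n}) :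
  (forall g, g \in T -> M g) -> (forall f, M f -> int_span T f) ->
  (n <= #|T|)%N.
Proof.
move=> MT spanT; pose combo (c : {ffun 'I_n -> 'I_p}) := \sum_j G j *+ c j.
have coord_combo c : torsion_coord (combo c) = \row_t ((m %/ p)%:R *+ c t).
  apply/rowP => t; rewrite /combo raddf_sum summxE (bigD1 t) //= big1 => [|j /negbTE tj].
    by rewrite (raddfMn torsion_coord) /= torsion_coord_G mulmxnE !mxE eqxx addr0.
  by rewrite (raddfMn torsion_coord) /= torsion_coord_G mulmxnE !mxE eq_sym tj mul0rn.
have coord_combo_inj : injective (torsion_coord \o combo).
  move=> c c' /= /rowP eq_cc'; apply/ffunP => t; apply: val_inj.
  move: (eq_cc' t); rewrite !coord_combo !mxE.
  by apply: Zp_divn_mulrn_inj => //; exact: dvdn_trans (dvdn_mull _ _) (dp_m t).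
have := @card_additive_span_le _ _ torsion_coord T
  [set combo c | c : {ffun 'I_n -> 'I_p}] p.
rewrite -imset_comp card_imset // card_ffun !card_ord leq_exp2l //; apply; first lia.
  by move=> g /MT /torsion_coord_M.
move=> _ /imsetP[c _ ->]; apply: int_span_sum => j.
by apply/int_spanMn/spanT.
Qed.

End TriangularBasis.

Lemma in_ideal0 (m l : nat) : @in_ideal m 0 l.
Proof. by exists 0; rewrite mul0r. Qed.

Lemma in_ideal1 (m : nat) (x : 'Z_m) : in_ideal x 1.
Proof. by exists x; rewrite mulr1. Qed.

Lemma in_idealN (m l : nat) (x : 'Z_m) : in_ideal x l -> in_ideal (- x) l.
Proof. by move=> [c ->]; exists (- c); rewrite mulNr. Qed.

Lemma in_idealB (m l : nat) (x y : 'Z_m) :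
  in_ideal x l -> in_ideal y l -> in_ideal (x - y) l.
Proof. by move=> [c ->] [c' ->]; exists (c - c'); rewrite mulrBl. Qed.

Lemma in_ideal_natr (m l x : nat) : (l %| x)%N -> @in_ideal m x%:R l.
Proof. by move=> /dvdnP[q ->]; exists q%:R; rewrite natrM. Qed.

Lemma in_ideal_dvdn (m l l' : nat) (x : 'Z_m) :
  (l %| l')%N -> in_ideal x l' -> in_ideal x l.
Proof. by move=> /dvdnP[q ->] [c ->]; exists (c * q%:R); rewrite natrM mulrA. Qed.

Lemma ones_spline (m n : nat) (l : nat -> nat) : is_spline l (ones m n).
Proof. by move=> j t _; rewrite !mxE subrr; apply: in_ideal0. Qed.

Section TreeDifference.

(* [pa j] is the parent of the vertex [j > 0] in a tree rooted at 0. *)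
Variables (m n : nat) (pa : 'I_n -> 'I_n).

Definition tree_diff (f : 'rV['Z_m]_n) : 'rV['Z_m]_n :=
  \row_j (f ord0 j - (if (0 < j)%N then f ord0 (pa j) else 0)).

Lemma tree_diff_is_additive : zmod_morphism tree_diff.
Proof.
by move=> f g; apply/rowP => j; rewrite !mxE; case: ifP => _; rewrite ?mxE; ring.
Qed.

HB.instance Definition _ := GRing.isZmodMorphism.Build _ _ tree_diff
  tree_diff_is_additive.

Hypothesis pa_lt : forall j : 'I_n, (0 < j)%N -> (pa j < j)%N.

Lemma tree_diff_eq0 f : tree_diff f = 0 -> f = 0.
Proof.
move=> /rowP df0; suff f0 t (j : 'I_n) : (j < t)%N -> f ord0 j = 0.
  by apply/rowP => j; rewrite (f0 j.+1) ?mxE.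
elim: t j => // t IHt j j_le; have := df0 j; rewrite !mxE.
case: ifP => [j_gt0|_]; last by rewrite subr0.
by rewrite (IHt (pa j)) ?subr0 //; exact: leq_trans (pa_lt j_gt0) j_le.
Qed.

End TreeDifference.

Lemma tree_diff_ones (m n : nat) (pa : 'I_n.+1 -> 'I_n.+1) :
  tree_diff pa (ones m n.+1) = \row_t (if t == ord0 then 1 else 0).
Proof.
apply/rowP => t; rewrite !mxE -val_eqE /=.
by case: t => [[|t]] //= _; rewrite ?subr0 ?subrr.
Qed.

Lemma setU1_imset_pos (T : finType) (n : nat) (x : T) (F : 'I_n.+1 -> T) :
  x |: [set F j | j : 'I_n.+1 & (0 < j)%N] =
  [set (if (0 < j)%N then F j else x) | j : 'I_n.+1].
Proof.
apply/setP => y; apply/setU1P/imsetP => [[->|/imsetP[j]]|[j _ ->]].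
- by exists ord0.
- by rewrite inE => j_gt0 ->; exists j; rewrite ?j_gt0.
- case: ifP => j_gt0; last by left.
  by right; apply/imsetP; exists j; rewrite ?inE.
Qed.

Section SplineTreeBasis.

Variables (m n p : nat) (l : nat -> nat).
Variables (pa : 'I_n.+1 -> 'I_n.+1) (d : 'I_n.+1 -> nat).
Variable gen : 'I_n.+1 -> 'rV['Z_m]_n.+1.

Hypothesis m_gt1 : (1 < m)%N.
Hypothesis p_gt1 : (1 < p)%N.
Hypothesis p_m : (p %| m)%N.
Hypothesis dp_m : forall j : 'I_n.+1, (0 < j)%N -> (d j * p %| m)%N.
Hypothesis pa_lt : forall j : 'I_n.+1, (0 < j)%N -> (pa j < j)%N.
Hypothesis spline_tree_diff : forall (f : 'rV['Z_m]_n.+1) (j : 'I_n.+1),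
  is_spline l f -> (0 < j)%N -> in_ideal (f ord0 j - f ord0 (pa j)) (d j).
Hypothesis gen_spline : forall j : 'I_n.+1, (0 < j)%N -> is_spline l (gen j).
Hypothesis tree_diff_gen : forall j : 'I_n.+1, (0 < j)%N ->
  tree_diff pa (gen j) = \row_t (if t == j then (d j)%:R else 0).
Hypothesis gen_flowup : forall j t : 'I_n.+1, (0 < j)%N -> (t < j)%N ->
  gen j ord0 t = 0.

Let G (j : 'I_n.+1) := if (0 < j)%N then gen j else ones m n.+1.
Let D (j : 'I_n.+1) := if (0 < j)%N then d j else 1%N.

Let G_spline j : is_spline l (G j).
Proof. by rewrite /G; case: ifP => [/gen_spline|_] //; apply: ones_spline. Qed.

Let tree_diff_spline (f : 'rV['Z_m]_n.+1) :
  is_spline l f -> forall j, in_ideal (tree_diff pa f ord0 j) (D j).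
Proof.
move=> f_spline j; rewrite /D mxE.
by case: ifP => [/(spline_tree_diff f_spline) | _]; last exact: in_ideal1.
Qed.

Let tree_diff_G j : tree_diff pa (G j) = \row_t (if t == j then (D j)%:R else 0).
Proof.
rewrite /G /D; case: ifPn => [/tree_diff_gen //|]; rewrite -eqn0Ngt => /eqP j0.
by rewrite tree_diff_ones; apply/rowP => t; rewrite !mxE -!val_eqE /= j0.
Qed.

Let Dp_m j : (D j * p %| m)%N.
Proof. by rewrite /D; case: ifP => [/dp_m|] //; rewrite mul1n. Qed.

Let G_flowup j : is_flowup_at l (G j) j.
Proof.
split; first exact: G_spline; rewrite /G; case: ifP => [j_gt0|]; last first.
  by rewrite lt0n => /negbFE/eqP j0; split=> [|t]; rewrite ?j0 // mxE oner_eq0.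
split; last by move=> t; apply: gen_flowup.
have /rowP/(_ j) := tree_diff_gen j_gt0; rewrite !mxE eqxx j_gt0.
rewrite (gen_flowup j_gt0 (pa_lt j_gt0)) subr0 => ->.
exact: natr_neq0_of_mul_dvdn m_gt1 p_gt1 (dp_m j_gt0).
Qed.

Lemma min_flowup_generating_set_of_tree :
  let S := ones m n.+1 |: [set gen j | j : 'I_n.+1 & (0 < j)%N] in
  is_min_flowup_generating_set l S /\ #|S| = n.+1.
Proof.
rewrite /= setU1_imset_pos -/G.
have card_S : #|[set G j | j : 'I_n.+1]| = n.+1.
  rewrite card_imset ?card_ord //.
  exact: (triangular_basis_inj tree_diff_G m_gt1 p_gt1 Dp_m).
split=> //; split; last by move=> _ /imsetP[j _ ->]; exists j; apply: G_flowup.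
split; first split.
- by move=> _ /imsetP[j _ ->].
- exact: (int_span_triangular (tree_diff_eq0 pa_lt) tree_diff_spline tree_diff_G).
- move=> T [MT spanT]; rewrite card_S.
  exact: (card_generating_set_ge tree_diff_spline tree_diff_G
    m_gt1 p_gt1 Dp_m G_spline MT spanT).
Qed.

End SplineTreeBasis.

Lemma rrS k : rr k.+1 = (rr k + k)%N.
Proof.
rewrite /rr; case: k => [|k] //=.
have -> : (k.+2 * k.+1 = k.+1 * 2 + k.+1 * k)%N by rewrite -mulnDr mulnC add2n.
by rewrite divnMDl // addnC.
Qed.

Lemma leq_rr : {homo rr : s t / (s <= t)%N}.
Proof. by apply: homo_leq => // [s t u|s]; [exact: leq_trans | rewrite rrS leq_addr]. Qed.

Lemma edge_index_le_rr (s t N : nat) : (s < t)%N -> (t < N)%N ->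
  (edge_index s.+1 t.+1 <= rr N)%N.
Proof.
move=> st tN; apply: leq_trans (leq_rr tN); rewrite /edge_index /= rrS; lia.
Qed.

Lemma rr_last_edge (n j : nat) : (j <= n)%N -> (rr n.+1 - (n.+1 - j.+1))%N = (rr n + j)%N.
Proof. by rewrite rrS; lia. Qed.

Lemma rr_add_le (n s t j : nat) : (s < j <= t)%N -> (t <= n)%N ->
  (rr t + s.+1 <= rr n + j)%N.
Proof.
move=> /andP[sj jt]; rewrite leq_eqVlt => /predU1P[-> | tn].
  by rewrite leq_add2l.
apply: leq_trans (leq_addr _ _); apply: leq_trans (leq_rr tn).
by rewrite rrS leq_add2l; lia.
Qed.

Lemma homo_leq_interval (T : Type) (r : T -> T -> Prop) (f : nat -> T) (N : nat) :
  (forall x, r x x) -> (forall y x z, r x y -> r y z -> r x z) ->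
  (forall s, (0 < s < N)%N -> r (f s) (f s.+1)) ->
  forall s t, (0 < s)%N -> (s <= t)%N -> (t <= N)%N -> r (f s) (f t).
Proof.
move=> r_refl r_trans f_step s t s_gt0 st tN.
pose D := [pred u | (0 < u <= N)%N].
have [sD tD] : s \in D /\ t \in D by rewrite !inE; lia.
apply: (homo_leq_in r_refl r_trans _ _ sD tD st) => [u v | u].
  by rewrite !inE => u_in v_in w /andP[uw wv]; rewrite inE; lia.
by rewrite !inE => u_in uS_in; apply: f_step; lia.
Qed.

Lemma mul_dvdn_of_exp_lt (a p e k m x : nat) : (x %| a ^ e)%N -> (p %| a)%N ->
  (e < k)%N -> (a ^ k %| m)%N -> (x * p %| m)%N.
Proof.
move=> x_ae p_a ek ak_m; apply: dvdn_trans (dvdn_mul x_ae p_a) _.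
by rewrite -expnSr; apply: dvdn_trans (dvdn_exp2l a ek) ak_m.
Qed.

Section StarBasis.

Variables (m n a k p : nat) (i : nat -> nat).
Hypotheses (m_gt1 : (1 < m)%N) (p_gt1 : (1 < p)%N) (p_a : (p %| a)%N).
Hypothesis ak_m : (a ^ k %| m)%N.
Hypothesis labels_dec : forall s, (1 <= s < rr n.+1)%N -> (a ^ i s.+1 %| a ^ i s)%N.
Hypothesis i1_lt : (i 1 < k)%N.

Let label_dvd s t : (0 < s)%N -> (s <= t)%N -> (t <= rr n.+1)%N ->
  (a ^ i t %| a ^ i s)%N.
Proof.
have dvdn_trans_rev y x z : (y %| x -> z %| y -> z %| x)%N.
  by move=> yx zy; apply: dvdn_trans zy yx.
exact: (homo_leq_interval (r := fun x y => (y %| x)%N) (f := fun s => (a ^ i s)%N)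
  dvdnn dvdn_trans_rev labels_dec).
Qed.

Lemma gen1_spline (j : 'I_n.+1) : is_spline (fun s => a ^ i s)%N (gen1 m a i j).
Proof.
move=> s t st; have edge_le := edge_index_le_rr st (ltn_ord t).
rewrite !mxE /edge_index /= in edge_le *.
have [<- | s_j] := eqVneq s j.
  have t_s : t != s by rewrite -val_eqE /= gtn_eqF.
  rewrite (negbTE t_s) subr0; apply/in_ideal_natr/label_dvd => //.
    by rewrite addn1.
  by rewrite leq_add // leq_rr // ltnW.
have [<- | _] := eqVneq t j; last first.
  by rewrite subrr; exact: in_ideal0.
rewrite sub0r; apply/in_idealN/in_ideal_natr/label_dvd => //.
  by rewrite addn1.
by rewrite leq_add2l.
Qed.

Lemma gen1_min_flowup_generating_set :
  let S := ones m n.+1 |: [set gen1 m a i j | j : 'I_n.+1 & (0 < j)%N] in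
  is_min_flowup_generating_set (fun s => a ^ i s)%N S /\ #|S| = n.+1.
Proof.
have p_m : (p %| m)%N.
  by apply: dvdn_trans p_a (dvdn_trans (dvdn_exp _ (dvdnn a)) ak_m); lia.
apply: (@min_flowup_generating_set_of_tree m n p (fun s => a ^ i s)%N (fun=> ord0)
  (fun j => a ^ i (rr j + 1))%N (gen1 m a i) m_gt1 p_gt1 p_m).
- move=> j j_gt0; apply: mul_dvdn_of_exp_lt p_a i1_lt ak_m.
  exact: label_dvd (leq_addl _ _) (edge_index_le_rr j_gt0 (ltn_ord j)).
- by [].
- move=> f j f_spline j_gt0; rewrite -opprB; apply: in_idealN.
  exact: f_spline ord0 j j_gt0.
- by move=> j _; apply: gen1_spline.
- move=> j j_gt0; have j_neq0 : (ord0 == j) = false by rewrite -val_eqE /= ltn_eqF.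
  by apply/rowP => t; rewrite !mxE j_neq0 if_same subr0.
- by move=> j t _ t_lt; rewrite mxE; case: eqP t_lt => // ->; rewrite ltnn.
Qed.

End StarBasis.

Section PathBasis.

Variables (m n a k p : nat) (i : nat -> nat).
Hypotheses (m_gt1 : (1 < m)%N) (p_gt1 : (1 < p)%N) (p_a : (p %| a)%N).
Hypothesis ak_m : (a ^ k %| m)%N.
Hypothesis labels_inc : forall s, (1 <= s < rr n.+1)%N -> (a ^ i s %| a ^ i s.+1)%N.
Hypothesis ilast_lt : (i (rr n.+1) < k)%N.

Let label_dvd s t : (0 < s)%N -> (s <= t)%N -> (t <= rr n.+1)%N ->
  (a ^ i s %| a ^ i t)%N.
Proof.
exact: (homo_leq_interval (f := fun s => (a ^ i s)%N) dvdnn (@dvdn_trans) labels_inc).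
Qed.

Let d (j : nat) := (a ^ i (rr n.+1 - (n.+1 - j.+1)))%N.

Let d_last (j : 'I_n.+1) : d j = (a ^ i (rr n + j))%N.
Proof. by rewrite /d rr_last_edge // -ltnS. Qed.

Lemma gen2_spline (j : 'I_n.+1) : is_spline (fun s => a ^ i s)%N (gen2 m a i j).
Proof.
move=> s t st; rewrite !mxE /edge_index /= -/(d j) d_last.
case: (leqP j s) => [js | sj].
  by rewrite (leq_trans js (ltnW st)) subrr; exact: in_ideal0.
case: (leqP j t) => [jt | tj]; last by rewrite subrr; exact: in_ideal0.
rewrite sub0r; apply/in_idealN/in_ideal_natr/label_dvd.
- by rewrite addnS.
- by rewrite rr_add_le ?sj // -ltnS.
- by rewrite rrS leq_add2l -ltnS.
Qed.

Let pred_ord (j : 'I_n.+1) : 'I_n.+1 := inord j.-1.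

Let pred_ordE (j : 'I_n.+1) : pred_ord j = j.-1 :> nat.
Proof. by rewrite inordK // (leq_ltn_trans (leq_pred j)). Qed.

Lemma spline_pred_diff (f : 'rV['Z_m]_n.+1) (j : 'I_n.+1) :
  is_spline (fun s => a ^ i s)%N f -> (0 < j)%N ->
  in_ideal (f ord0 j - f ord0 (pred_ord j)) (d j).
Proof.
move=> f_spline j_gt0; rewrite d_last.
have pred_last : in_ideal (f ord0 (pred_ord j) - f ord0 ord_max) (a ^ i (rr n + j)).
  have := f_spline (pred_ord j) ord_max; rewrite pred_ordE /edge_index /= prednK //.
  by apply; rewrite -ltnS.
have [j_max | j_lt] := eqVneq j ord_max.
  by rewrite j_max in pred_last *; rewrite -opprB; apply: in_idealN.
have -> : f ord0 j - f ord0 (pred_ord j) =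
    (f ord0 j - f ord0 ord_max) - (f ord0 (pred_ord j) - f ord0 ord_max).
  by rewrite opprB addrA subrK.
have j_lt_n : (j < n)%N.
  by rewrite ltn_neqAle -ltnS ltn_ord andbT; rewrite -val_eqE in j_lt.
apply: in_idealB pred_last; apply: in_ideal_dvdn (f_spline j ord_max j_lt_n).
by apply: label_dvd; rewrite /edge_index /= ?rrS; lia.
Qed.

Lemma gen2_min_flowup_generating_set :
  let S := ones m n.+1 |: [set gen2 m a i j | j : 'I_n.+1 & (0 < j)%N] in
  is_min_flowup_generating_set (fun s => a ^ i s)%N S /\ #|S| = n.+1.
Proof.
have p_m : (p %| m)%N.
  by apply: dvdn_trans p_a (dvdn_trans (dvdn_exp _ (dvdnn a)) ak_m); lia.
apply: (@min_flowup_generating_set_of_tree m n p (fun s => a ^ i s)%N pred_ord d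
  (gen2 m a i) m_gt1 p_gt1 p_m).
- move=> j j_gt0; have j_lt := ltn_ord j.
  apply: mul_dvdn_of_exp_lt p_a ilast_lt ak_m.
  by rewrite d_last; apply: label_dvd => //; rewrite ?rrS; lia.
- by move=> j j_gt0; rewrite pred_ordE ltn_predL.
- by move=> f j f_spline j_gt0; apply: spline_pred_diff.
- by move=> j _; apply: gen2_spline.
- move=> j j_gt0; apply/rowP => t; rewrite !mxE pred_ordE -[t == j](inj_eq val_inj) /=.
  have [t0 | t_gt0] := posnP t.
    by rewrite t0 leqNgt j_gt0 /= subr0 (ltn_eqF j_gt0).
  case: (ltngtP t j) => [tj | jt | tj].
  + by rewrite leqNgt (leq_ltn_trans (leq_pred t) tj) subrr.
  + by rewrite -ltnS (prednK t_gt0) jt subrr.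
  + by rewrite tj leqNgt ltn_predL j_gt0 subr0.
- by move=> j t _ t_lt; rewrite mxE leqNgt t_lt.
Qed.

End PathBasis.

Unset Implicit Arguments.

Theorem mainTheorem5 (m n a k : nat) (i : nat -> nat) :
  (1 < m)%N -> (2 <= n)%N -> (1 < a)%N -> zero_divisor m a ->
  (1 <= k)%N -> (a ^ k %| m)%N ->
  (* part (1) *)
  (((forall s, (1 <= s < rr n)%N -> (a ^ i s.+1 %| a ^ i s)%N) ->
    (a ^ i 1 %| a ^ k)%N -> (1 <= i (rr n))%N -> (i 1 < k)%N ->
    let S := ones m n |: [set gen1 m a i j | j : 'I_n & (0 < j)%N] in
    is_min_flowup_generating_set (fun s => (a ^ i s)%N) S /\ #|S| = n)
  /\
  (* part (2) *)
   ((forall s, (1 <= s < rr n)%N -> (a ^ i s %| a ^ i s.+1)%N) ->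
    (a ^ i (rr n) %| a ^ k)%N -> (1 <= i 1)%N -> (i (rr n) < k)%N ->
    let S := ones m n |: [set gen2 m a i j | j : 'I_n & (0 < j)%N] in
    is_min_flowup_generating_set (fun s => (a ^ i s)%N) S /\ #|S| = n)).
Proof.
move=> m_gt1 n_ge2 a_gt1 _ _ ak_m; case: n n_ge2 => [|n] // _.
have p_gt1 := prime_gt1 (pdiv_prime a_gt1).
split=> [labels_dec _ _ i1_lt | labels_inc _ _ ilast_lt].
- exact: gen1_min_flowup_generating_set m_gt1 p_gt1 (pdiv_dvd a) ak_m labels_dec i1_lt.
- exact: gen2_min_flowup_generating_set m_gt1 p_gt1 (pdiv_dvd a) ak_m labels_inc ilast_lt.
Qed.
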